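(* Let $(\mathbf X_n^I)_{n\ge1}$ be adapted to the filtration $\mathcal G=(\mathcal G_n)_{n\ge0}$. The following are equivalent: (i) $(\mathbf X_n^I)$ is partially $\mathcal G$-c.i.d.; (ii) for every $j\in I$ and every bounded measurable $f:\mathbb X\to\mathbb R$, $\big(\mathbb E[f(X_{n+1,j})\mid\mathcal G_n^j]\big)_{n\ge0}$ is a martingale with respect to $\mathcal G^j=(\mathcal G_n^j)_{n\ge0}$; (iii) for every $n\ge0$ and $j\in I$, $(\mathbf X^{I\setminus\{j\}}_{n+1},X_{\tau+1,j})\overset{d}{=}(\mathbf X^{I\setminus\{j\}}_{n+1},X_{n+1,j})$ for every finite $\mathcal G$-stopping time $\tau$ with $\tau\ge n$.
   Context: All random elements live on $(\Omega,\mathcal F,\mathbb P)$; $\mathbb X$ is Polish with Borel $\sigma$-algebra $\mathcal X$; $I$ is a finite or countable index set; $[X_{n,i}]_{n\ge1,i\in I}$ is an array of $\mathbb X$-valued random variables with rows $\mathbf X_n^I=(X_{n,i})_{i\in I}$, and $\mathbf X_n^J=(X_{n,i})_{i\in J}$ for $J\subset I$. For a filtration $\mathcal G=(\mathcal G_n)_{n\ge0}$ and $j\in I$, $\mathcal G_n^j=\mathcal G_n\vee\sigma(X_{n+1,i}:i\ne j)$. The process $(\mathbf X_n^I)$ is partially $\mathcal G$-c.i.d. if it is adapted to $\mathcal G$ and, for every $j\in I$, $k\ge1$, $n\ge0$ and bounded measurable $f:\mathbb X\to\mathbb R$, $\mathbb E[f(X_{n+1,j})\mid\mathcal G_n^j]=\mathbb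 E[f(X_{n+k,j})\mid\mathcal G_n^j]$ a.s. *)

From HB Require Import structures.
From mathcomp Require Import all_boot all_order all_algebra.
From mathcomp Require Import all_classical all_reals all_analysis.
Set Implicit Arguments. Unset Strict Implicit. Unset Printing Implicit Defensive.
Import Order.TTheory GRing.Theory Num.Theory.
Local Open Scope classical_set_scope.
Local Open Scope ring_scope.

Section Defs.
Context {R : realType}.

(* Polish space: a (pseudo)metric space that is complete (the type is a
   completePseudoMetricType), Hausdorff (so the pseudometric is a metric)
   and separable (has a countable dense subset). *)
Definition polish (X : completePseudoMetricType R) : Prop :=
  hausdorff_space X /\ exists2 D : set X, countable D & dense D.

Definition borel (X : topologicalType) : set (set X) := <<s open >>.

Definition bounded_borel_fun (X : topologicalType) (f : X -> R) : Prop :=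
  (forall B : set R, measurable B -> @borel X (f @^-1` B)) /\
  exists M : R, forall x, `|f x| <= M.

Context {d : measure_display} {Omega : measurableType d}.
Variable P : probability Omega R.

Definition sub_sigma (H : set (set Omega)) : Prop :=
  sigma_algebra setT H /\ H `<=` measurable.

Definition filtration (G : nat -> set (set Omega)) : Prop :=
  (forall n, sub_sigma (G n)) /\ (forall n, G n `<=` G n.+1).

Definition is_cond_exp (H : set (set Omega)) (Z Y : Omega -> R) : Prop :=
  [/\ (forall B : set R, measurable B -> H (Y @^-1` B)),
      P.-integrable setT (fun x => (Y x)%:E) &
      forall A, H A ->
        (\int[P]_(x in A) (Y x)%:E = \int[P]_(x in A) (Z x)%:E)%E].

Definition martingale (H : nat -> set (set Omega)) (M : nat -> Omega -> R) :=
  forall n, is_cond_exp (H n) (M n.+1) (M n).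

Definition stopping_time (G : nat -> set (set Omega)) (tau : Omega -> nat) :=
  forall m, G m (tau @^-1` [set m]).

Context {X : completePseudoMetricType R} {I : countType}.

(* array [X_{n,i}]; only the rows n >= 1 are used *)
Definition adapted (G : nat -> set (set Omega)) (Xa : nat -> I -> Omega -> X) :=
  forall n i B, (0 < n)%N -> @borel X B -> G n (Xa n i @^-1` B).

Definition Gj (G : nat -> set (set Omega)) (Xa : nat -> I -> Omega -> X)
    (j : I) (n : nat) : set (set Omega) :=
  <<s G n `|` \bigcup_(i in [set i | i != j])
        preimage_set_system setT (Xa n.+1 i) (@borel X) >>.

Definition partially_cid (G : nat -> set (set Omega))
    (Xa : nat -> I -> Omega -> X) : Prop :=
  adapted G Xa /\
  forall (j : I) (k n : nat) (f : X -> R), (0 < k)%N -> bounded_borel_fun f ->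
  forall Y1 Y2 : Omega -> R,
    is_cond_exp (Gj G Xa j n) (f \o Xa n.+1 j) Y1 ->
    is_cond_exp (Gj G Xa j n) (f \o Xa (n + k)%N j) Y2 ->
    {ae P, forall w, Y1 w = Y2 w}.

Definition prod_sigma : set (set (I -> X)) :=
  <<s \bigcup_(i in [set: I])
        preimage_set_system setT (fun g : I -> X => g i) (@borel X) >>.

Definition eq_in_law (Z1 Z2 : Omega -> (I -> X)) : Prop :=
  forall B, prod_sigma B -> P (Z1 @^-1` B) = P (Z2 @^-1` B).

End Defs.

From HB Require Import structures.
From mathcomp Require Import all_boot all_order all_algebra.
From mathcomp Require Import all_classical all_reals all_analysis.
From mathcomp Require Import measurable_realfun zify lra.
Import Order.TTheory GRing.Theory Num.Theory.
Local Open Scope classical_set_scope.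
Local Open Scope ring_scope.
Set Implicit Arguments. Unset Strict Implicit. Unset Printing Implicit Defensive.

(* All three conditions are equivalent to the one-step identity
     E[f(X_{n+1,j}) ; A] = E[f(X_{n+2,j}) ; A]   for A in G_n^j,
   which iterates to X_{n+k,j} because G_n^j is contained in G_{n+1}^j.
   For (i) and (ii) this is a rephrasing through the defining property of
   conditional expectations (which exist by Radon-Nikodym on the trace of P on
   the sub-sigma-algebra).  Since the identity only involves the laws of
   X_{n+1,j} and X_{n+2,j} restricted to A, it suffices to check it for
   indicators f = 1_E.  For (iii), a pi-lambda argument on cylinders reduces the
   equality in law to P(A, X_{tau+1,j} in E) = P(A, X_{n+1,j} in E) for A in G_n^j;
   splitting on {tau <= N} and applying the one-step identity on {tau > N},
   which lies in G_N^j, telescopes to this equality up to an error P(tau > N)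
   that tends to 0.  Conversely, the stopping time equal to n+1 on B and n off B,
   for B in G_n, gives back the one-step identity on the sets of G_n^j generated
   by G_n and the other coordinates of row n+1. *)

Section sigma_algebra_lemmas.
Variable T : Type.
Implicit Types S C L : set (set T).

Lemma sigma_algebra_setT S : sigma_algebra setT S -> S setT.
Proof. by move/sigma_algebra_dynkin/dynkinT. Qed.

Lemma sigma_algebra_setC S A : sigma_algebra setT S -> S A -> S (~` A).
Proof. by move/sigma_algebra_dynkin/dynkinC; apply. Qed.

Lemma sigma_algebra_setI S A B : sigma_algebra setT S -> S A -> S B -> S (A `&` B).
Proof.
move=> hS SA SB; rewrite -(setCK (A `&` B)) setCI -bigcup2E.
apply: sigma_algebra_setC => //; case: (hS) => S0 _ SU.
by apply: SU => -[|[|k]] //=; apply: sigma_algebra_setC.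
Qed.

Lemma g_sigma_algebra_sub_dynkin C L :
  setI_closed C -> C `<=` L -> dynkin L -> <<s C >> `<=` L.
Proof.
by move=> CI CL dL; rewrite -setI_closed_g_dynkin_g_sigma_algebra //; exact: smallest_sub.
Qed.

End sigma_algebra_lemmas.

Lemma borel_sigma_algebra {X : topologicalType} : sigma_algebra setT (@borel X).
Proof. exact: smallest_sigma_algebra. Qed.

Section sub_sigma_probability.
Variables (R : realType) (d : measure_display) (Omega : measurableType d)
  (P : probability Omega R) (H : set (set Omega)) (sH : sub_sigma H).
Local Notation OmegaH := (g_sigma_algebraType H).

Lemma measurable_subE : @measurable _ OmegaH = H.
Proof. exact: (measurable_g_measurableTypeE sH.1). Qed.

Lemma measurable_sub (A : set OmegaH) : measurable A -> measurable (A : set Omega).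
Proof. by rewrite measurable_subE => /sH.2. Qed.

(* The dummy argument makes the measure instance below depend on [sH]. *)
Definition Psub (_ : sub_sigma H) : set OmegaH -> \bar R := fun A => P A.

Let Psub0 : Psub sH set0 = 0%E. Proof. exact: measure0. Qed.
Let Psub_ge0 A : (0 <= Psub sH A)%E. Proof. exact: measure_ge0. Qed.
Let Psub_sigma_additive : semi_sigma_additive (Psub sH).
Proof.
move=> F mF tF mU; apply: (@measure_semi_sigma_additive _ Omega _ P) => //.
- by move=> n; apply: measurable_sub.
- exact: measurable_sub.
Qed.

HB.instance Definition _ :=
  isMeasure.Build _ OmegaH R (Psub sH) Psub0 Psub_ge0 Psub_sigma_additive.
HB.instance Definition _ := Measure_isProbability.Build _ OmegaH R (Psub sH)
  (@probability_setT _ _ _ P).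

Lemma measurable_id_sub : measurable_fun [set: Omega] (id : Omega -> OmegaH).
Proof. by move=> _ B mB; rewrite setTI; apply: measurable_sub. Qed.

Lemma measurable_fun_sub (f : Omega -> \bar R) :
  measurable_fun setT (f : OmegaH -> \bar R) -> measurable_fun [set: Omega] f.
Proof. by move=> mf _ B mB; apply: measurable_sub; exact: mf. Qed.

Lemma integral_sub (f : Omega -> \bar R) (A : set Omega) : H A ->
  measurable_fun setT (f : OmegaH -> \bar R) -> P.-integrable A f ->
  (\int[Psub sH]_(x in A) f x = \int[P]_(x in A) f x)%E.
Proof.
move=> HA mf intf.
have := @integral_pushforward _ _ Omega OmegaH R id measurable_id_sub P A f mf intf.
by rewrite measurable_subE => /(_ HA).
Qed.

Lemma integrable_sub (f : Omega -> \bar R) (A : set Omega) : H A ->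
  measurable_fun setT (f : OmegaH -> \bar R) -> P.-integrable A f ->
  (Psub sH).-integrable (A : set OmegaH) f.
Proof.
move=> HA mf intf.
have := @integrable_pushforward _ _ Omega OmegaH R id measurable_id_sub P A f mf intf.
by rewrite measurable_subE => /(_ HA).
Qed.

Lemma sub_integrable (f : Omega -> \bar R) :
  measurable_fun setT (f : OmegaH -> \bar R) -> (Psub sH).-integrable [set: OmegaH] f ->
  P.-integrable [set: Omega] f.
Proof.
move=> mf /integrableP[_ fi]; apply/integrableP; split; first exact: measurable_fun_sub.
rewrite -(@ge0_integral_pushforward _ _ Omega OmegaH R id measurable_id_sub P
  setT (abse \o f)) //.
- exact: measurableT_comp (@abse_measurable R setT) mf.
- by move=> ? _; exact: abse_ge0.
Qed.

Lemma is_cond_exp_measurable (Z Y : Omega -> R) : is_cond_exp P H Z Y ->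
  measurable_fun setT ((EFin \o Y) : OmegaH -> \bar R).
Proof.
by case=> mY _ _; apply/measurable_EFinP => _ B mB; rewrite setTI measurable_subE; exact: mY.
Qed.

Section cond_exp_existence.
Variables (Z : Omega -> R) (intZ : P.-integrable [set: Omega] (EFin \o Z)).

Definition nu_sub : set OmegaH -> \bar R := fun A => induced_charge intZ A.

Let nu_sub0 : nu_sub set0 = 0%E. Proof. exact: charge0. Qed.
Let nu_sub_fin A : measurable A -> nu_sub A \is a fin_num.
Proof. by move=> mA; apply: fin_num_measure; apply: measurable_sub. Qed.
Let nu_sub_sigma_additive : semi_sigma_additive nu_sub.
Proof.
move=> F mF tF mU.
apply: (@charge_semi_sigma_additive _ Omega _ (induced_charge intZ)) => //.
- by move=> n; apply: measurable_sub.
- exact: measurable_sub.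
Qed.

HB.instance Definition _ :=
  isCharge.Build _ OmegaH R nu_sub nu_sub0 nu_sub_fin nu_sub_sigma_additive.

Lemma nu_sub_dominates : nu_sub `<< Psub sH.
Proof.
apply/null_content_dominatesP => A mA PA.
apply: null_set_integral => //; first exact: measurable_sub.
by apply: measurable_funTS; case/integrableP: intZ.
Qed.

Definition cond_exp : Omega -> R := fun x => fine (Radon_Nikodym nu_sub (Psub sH) x).

Lemma EFin_cond_exp : EFin \o cond_exp = Radon_Nikodym nu_sub (Psub sH).
Proof.
apply/funext => x /=; rewrite /cond_exp fineK //.
exact: Radon_Nikodym_fin_num nu_sub_dominates.
Qed.

Lemma integrable_cond_exp : (Psub sH).-integrable setT (EFin \o cond_exp).
Proof. rewrite EFin_cond_exp; exact: Radon_Nikodym_integrable nu_sub_dominates. Qed.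

Lemma is_cond_exp_cond_exp : is_cond_exp P H Z cond_exp.
Proof.
have mY : measurable_fun setT ((EFin \o cond_exp) : OmegaH -> \bar R).
  exact: measurable_int integrable_cond_exp.
have intY : P.-integrable [set: Omega] (EFin \o cond_exp).
  exact: sub_integrable integrable_cond_exp.
split => //.
- move=> B mB; rewrite -measurable_subE -(setTI (_ @^-1` _)).
  by move/measurable_EFinP : mY; apply.
- move=> A HA; have mA : measurable (A : set OmegaH) by rewrite measurable_subE.
  rewrite -[RHS]/(nu_sub A) (Radon_Nikodym_integral nu_sub_dominates mA).
  rewrite -EFin_cond_exp integral_sub //.
  by apply: integrableS intY => //; exact: sH.2.
Qed.

End cond_exp_existence.

Lemma is_cond_exp_ae_eq (Z Y1 Y2 : Omega -> R) :
  is_cond_exp P H Z Y1 -> is_cond_exp P H Z Y2 -> {ae P, forall w, Y1 w = Y2 w}.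
Proof.
move=> c1 c2; have [_ i1 e1] := c1; have [_ i2 e2] := c2.
have m1 := is_cond_exp_measurable c1; have m2 := is_cond_exp_measurable c2.
have HT : H setT by exact: sigma_algebra_setT sH.1.
have e12 (E : set OmegaH) : E `<=` setT -> measurable E ->
    (\int[Psub sH]_(x in E) (EFin \o Y1) x = \int[Psub sH]_(x in E) (EFin \o Y2) x)%E.
  move=> _; rewrite measurable_subE => HE.
  have mE := sH.2 _ HE.
  rewrite !integral_sub //; first by rewrite e1 // e2.
  - by apply: integrableS i2.
  - by apply: integrableS i1.
have [N [mN PN sN]] := integral_ae_eq measurableT (integrable_sub HT m1 i1) m2 e12.
exists N; split => //; first exact: measurable_sub.
by move=> w /= nY; apply: sN => /= /(_ Logic.I) [] /nY.
Qed.

Lemma cond_exp_ae_eq_integral (Z1 Z2 Y1 Y2 : Omega -> R) A :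
  is_cond_exp P H Z1 Y1 -> is_cond_exp P H Z2 Y2 ->
  {ae P, forall w, Y1 w = Y2 w} -> H A ->
  (\int[P]_(x in A) (Z1 x)%:E = \int[P]_(x in A) (Z2 x)%:E)%E.
Proof.
move=> [m1 i1 e1] [m2 i2 e2] [N [mN PN sN]] HA.
rewrite -e1 // -e2 //; apply: ae_eq_integral; first exact: sH.2.
- exact/measurable_funTS/(measurable_int _ i1).
- exact/measurable_funTS/(measurable_int _ i2).
- by exists N; split => // w /= nw; apply: sN => /= e; apply: nw => _; rewrite e.
Qed.

End sub_sigma_probability.

Section probability_lemmas.
Variables (R : realType) (d : measure_display) (Omega : measurableType d)
  (P : probability Omega R).

Lemma bounded_integrable (g : Omega -> R) (A : set Omega) (M : R) : measurable A ->
  measurable_fun A g -> (forall x, `|g x| <= M) -> P.-integrable A (EFin \o g).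
Proof.
move=> mA mg hM; apply: measurable_bounded_integrable => //.
- exact: (le_lt_trans (probability_le1 P mA)) (ltry _).
- rewrite /bounded_near; near=> M' => x _ /=.
  apply: le_trans (hM _) _; near: M'; apply: nbhs_pinfty_ge; exact: num_real.
Unshelve. all: by end_near.
Qed.

Definition Pr (A : set Omega) : R := fine (P A).

Lemma PrE A : measurable A -> P A = (Pr A)%:E.
Proof. by move=> mA; rewrite fineK // fin_num_measure. Qed.

Lemma Pr_ge0 A : 0 <= Pr A.
Proof. exact/fine_ge0/measure_ge0. Qed.

Lemma Pr_le A B : measurable A -> measurable B -> A `<=` B -> Pr A <= Pr B.
Proof.
move=> mA mB AB; apply: fine_le; try exact: fin_num_measure.
by apply: le_measure => //; rewrite inE.
Qed.

Lemma Pr_setIC A B : measurable A -> measurable B ->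
  Pr A = Pr (A `&` B) + Pr (A `&` ~` B).
Proof.
move=> mA mB; have mAB := measurableI _ _ mA mB.
have mAnB := measurableI _ _ mA (measurableC mB).
rewrite /Pr -fineD ?fin_num_measure // -measureU //.
  by rewrite -setIUr setUCr setIT.
by rewrite setIACA setICr setI0.
Qed.

Lemma dynkin_eq_trace (S1 S2 : set Omega) : measurable S1 -> measurable S2 ->
  P S1 = P S2 ->
  dynkin [set A | measurable A /\ P (A `&` S1) = P (A `&` S2)].
Proof.
move=> mS1 mS2 e12; split.
- by split => //; rewrite !setTI.
- move=> A [mA eA]; split; first exact: measurableC.
  have fin S : measurable S -> (P S < +oo)%E.
    by move=> mS; rewrite (le_lt_trans (probability_le1 P mS)) ?ltry.
  rewrite ![~` A `&` _]setIC -!setDE !measureD ?fin //.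
  by congr (_ - _)%E; rewrite // setIC [S2 `&` _]setIC.
- move=> F tF LF; split; first by apply: bigcupT_measurable => k; case: (LF k).
  have mFS S k : measurable S -> measurable (F k `&` S).
    by move=> mS; apply: measurableI => //; case: (LF k).
  rewrite !setI_bigcupl !measure_bigcup //; try exact: trivIset_setIr.
  + by apply: eq_eseriesr => k _; case: (LF k).
  + by move=> k _; exact: mFS.
  + by move=> k _; exact: mFS.
Qed.

Lemma measure_switch (T B S1 S2 : set Omega) :
  measurable T -> measurable B -> measurable S1 -> measurable S2 ->
  P (T `&` ((B `&` S2) `|` (~` B `&` S1))) = P (T `&` S1) ->
  P (T `&` B `&` S1) = P (T `&` B `&` S2).
Proof.
move=> mT mB mS1 mS2; set U := (B `&` S2) `|` (~` B `&` S1).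
have mU : measurable U.
  by apply: measurableU; apply: measurableI => //; exact: measurableC.
have eB : T `&` U `&` B = T `&` B `&` S2.
  apply/seteqP; split => w /=; first by case=> -[Tw [[Bw S2w]|[nBw _]]] Bw'.
  by case=> -[Tw Bw] S2w; split => //; split => //; left.
have eBc : T `&` U `&` ~` B = T `&` S1 `&` ~` B.
  apply/seteqP; split => w /=; first by case=> -[Tw [[Bw _]|[nBw S1w]]] nBw'.
  by case=> -[Tw S1w] nBw; split => //; split => //; right.
have mTS1 := measurableI _ _ mT mS1.
move=> hU; have {hU} : Pr (T `&` U) = Pr (T `&` S1) by rewrite /Pr hU.
rewrite (Pr_setIC _ mB) ?(Pr_setIC mTS1 mB) ?eB ?eBc //; last exact: measurableI.
rewrite !PrE; try by repeat apply: measurableI.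
by rewrite [T `&` S1 `&` B]setIAC => ?; congr (_%:E); lra.
Qed.

End probability_lemmas.

Lemma dynkin_eq_law (R : realType) (d : measure_display) (Omega : measurableType d)
    (P : probability Omega R) (T : Type) (Z1 Z2 : Omega -> T) :
  dynkin [set B | [/\ measurable (Z1 @^-1` B), measurable (Z2 @^-1` B) &
                     P (Z1 @^-1` B) = P (Z2 @^-1` B)]].
Proof.
split.
- by rewrite /= !preimage_setT probability_setT; split.
- move=> B [mB1 mB2 eB]; rewrite /= -!preimage_setC.
  by split; [exact: measurableC|exact: measurableC|rewrite !probability_setC // eB].
- move=> F tF LF.
  have mF1 k : measurable (Z1 @^-1` F k) by case: (LF k).
  have mF2 k : measurable (Z2 @^-1` F k) by case: (LF k).
  have tpre (Z : Omega -> T) : trivIset setT (fun k => Z @^-1` F k).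
    apply/trivIsetP => a b _ _ ab; rewrite -preimage_setI.
    by move/trivIsetP : tF => /(_ a b Logic.I Logic.I ab) ->; rewrite preimage_set0.
  rewrite /= !preimage_bigcup; split; try exact: bigcupT_measurable.
  by rewrite !measure_bigcup //; apply: eq_eseriesr => k _; case: (LF k).
Qed.

Section tail_probability.
Variables (R : realType) (d : measure_display) (Omega : measurableType d)
  (P : probability Omega R) (tau : Omega -> nat).
Hypothesis mtau : forall N, measurable [set w | (tau w <= N)%N].

Lemma Pr_tail_small n e : 0 < e ->
  exists N, (n <= N)%N /\ Pr P (~` [set w | (tau w <= N)%N]) <= e.
Proof.
move=> e0.
have cv : (P \o (fun N => [set w | (tau w <= N)%N])) x @[x --> \oo] --> P setT.
  have -> : [set: Omega] = \bigcup_N [set w | (tau w <= N)%N].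
    by apply/seteqP; split => // w _; exists (tau w) => /=.
  apply: nondecreasing_cvg_mu => //; first exact: bigcupT_measurable.
  by move=> a c ac; apply/subsetPset => w /= /leq_trans; apply.
rewrite probability_setT in cv.
have := fine_cvg cv; move=> /(_ _)/cvgrPdist_le /(_ e e0) [N0 _ hN0].
exists (maxn n N0); split; first exact: leq_maxl.
have := hN0 (maxn n N0) (leq_maxr _ _).
have := Pr_setIC P measurableT (mtau (maxn n N0)).
by rewrite !setTI /Pr probability_setT /= => ->; rewrite ler_norml => /andP[_]; lra.
Qed.

End tail_probability.

Section restricted_law.
Variables (R : realType) (d : measure_display) (Omega : measurableType d)
  (P : probability Omega R) (X : ptopologicalType).
Local Notation Xborel := (g_sigma_algebraType (@open X)).
Variable A : set Omega.
Hypothesis mA : measurable A.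

(* [phi] on [A], a constant off [A]: this turns integrals over [A] into
   integrals against a pushforward probability on the Borel sets of [X]. *)
Definition extend_on (phi : Omega -> X) : Omega -> Xborel :=
  fun w => if w \in A then phi w else point.

Lemma preimage_extend_on phi (E : set X) : extend_on phi @^-1` E =
  (A `&` phi @^-1` E) `|` (~` A `&` cst point @^-1` E).
Proof.
apply/seteqP; split => w /=; rewrite /extend_on.
- by case: ifPn => [/set_mem wA|]; [left|rewrite notin_setE => wA h; right].
- by case=> -[wA h]; [rewrite (mem_set wA)|rewrite ifN // notin_setE].
Qed.

Lemma measurable_preimage_cst (E : set X) : measurable (cst point @^-1` E : set Omega).
Proof. by rewrite preimage_cst; case: ifPn. Qed.

Lemma measurable_extend_on phi :
  (forall E, borel E -> measurable (phi @^-1` E)) ->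
  measurable_fun [set: Omega] (extend_on phi).
Proof.
move=> mphi _ E mE; rewrite setTI preimage_extend_on.
apply: measurableU; apply: measurableI => //; first exact: mphi.
  exact: measurableC.
exact: measurable_preimage_cst.
Qed.

Lemma integral_extend_on (f : X -> R) phi :
  measurable_fun [set: Omega] (extend_on phi) ->
  measurable_fun [set: Xborel] (f : Xborel -> R) ->
  (\int[P]_x (f (extend_on phi x))%:E =
   \int[P]_(x in A) (f (phi x))%:E + \int[P]_(x in ~` A) (f point)%:E)%E.
Proof.
move=> mpsi mf; rewrite -(setUv A) integral_setU //; last 3 first.
- exact: measurableC.
- by rewrite setUv; apply/measurable_EFinP; exact: measurableT_comp.
- by rewrite /disj_set setICr.
congr (_ + _)%E; apply: eq_integral => x xA /=; rewrite /extend_on.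
  by rewrite xA.
by rewrite ifN // notin_setE -in_setE.
Qed.

Section trace_law.
Variables phi1 phi2 : Omega -> X.
Hypotheses (mphi1 : forall E, borel E -> measurable (phi1 @^-1` E))
  (mphi2 : forall E, borel E -> measurable (phi2 @^-1` E))
  (law12 : forall E, borel E -> P (A `&` phi1 @^-1` E) = P (A `&` phi2 @^-1` E)).

Lemma pushforward_extend_on_eq (E : set Xborel) : measurable E ->
  pushforward P (extend_on phi1) E = pushforward P (extend_on phi2) E.
Proof.
move=> mE; have mrest := measurableI _ _ (measurableC mA) (measurable_preimage_cst E).
have disj phi : (A `&` phi @^-1` E) `&` (~` A `&` cst point @^-1` E) = set0.
  by rewrite setIACA setICr set0I.
rewrite /pushforward !preimage_extend_on !measureU //.
- by congr (_ + _)%E; exact: law12.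
- exact: measurableI mA (mphi2 mE).
- exact: measurableI mA (mphi1 mE).
Qed.

Lemma integral_eq_trace_law (f : X -> R) : bounded_borel_fun f ->
  (\int[P]_(x in A) (f (phi1 x))%:E = \int[P]_(x in A) (f (phi2 x))%:E)%E.
Proof.
move=> [bf [M fM]].
have mf : measurable_fun [set: Xborel] (f : Xborel -> R).
  by move=> _ B mB; rewrite setTI; exact: bf.
have mEf : measurable_fun [set: Xborel] (EFin \o (f : Xborel -> R)).
  exact/measurable_EFinP.
have m1 := measurable_extend_on mphi1; have m2 := measurable_extend_on mphi2.
have integrable_pushforward phi : measurable_fun [set: Omega] (extend_on phi) ->
    P.-integrable (extend_on phi @^-1` setT) ((EFin \o (f : Xborel -> R)) \o extend_on phi).
  move=> mpsi; rewrite preimage_setT.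
  by apply: (@bounded_integrable _ _ _ P _ _ M) => //; exact: measurableT_comp.
have h1 := integral_pushforward m1 mEf (integrable_pushforward _ m1) measurableT.
have h2 := integral_pushforward m2 mEf (integrable_pushforward _ m2) measurableT.
rewrite preimage_setT in h1 h2.
have : (\int[pushforward P (extend_on phi1)]_y (EFin \o (f : Xborel -> R)) y =
    \int[pushforward P (extend_on phi2)]_y (EFin \o (f : Xborel -> R)) y)%E.
  by apply: eq_measure_integral => E mE _; exact: pushforward_extend_on_eq.
rewrite h1 h2 !integral_extend_on //.
have cfin : (\int[P]_(x in ~` A) (f point)%:E)%E \is a fin_num.
  by rewrite integral_cst ?fin_numM ?fin_num_measure //; exact: measurableC.
by move/(congr1 (fun z => z - \int[P]_(x in ~` A) (f point)%:E)%E); rewrite !addeK.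
Qed.

End trace_law.

End restricted_law.

Section coordinate_replacement.
Variables (R : realType) (d : measure_display) (Omega : measurableType d)
  (P : probability Omega R) (X : completePseudoMetricType R) (I : countType).
Variable j : I.

Definition sigma_except : set (set (I -> X)) :=
  <<s \bigcup_(i in [set i | i != j])
        preimage_set_system setT (fun g : I -> X => g i) (@borel X) >>.

Lemma sigma_algebra_except : sigma_algebra setT sigma_except.
Proof. exact: smallest_sigma_algebra. Qed.

Lemma sigma_except_eq D : sigma_except D ->
  forall g g', (forall i, i != j -> g i = g' i) -> D g -> D g'.
Proof.
pose S := [set D : set (I -> X) |
  forall g g', (forall i, i != j -> g i = g' i) -> D g -> D g'].
suff: sigma_except `<=` S by move=> h /h.
apply: smallest_sub.
- split => [g g' _ //| A SA g g' gg' [_ nAg]|F SF g g' gg' [k _ Fkg]].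
  + by split => // Ag'; apply: nAg; apply: (SA g') => // i /gg' ->.
  + by exists k => //; exact: (SF k g).
- by move=> A [i /= ij [B bB <-]] g g' gg' [_ Bg]; split => //=; rewrite -(gg' i ij).
Qed.

Lemma sigma_except_prod : sigma_except `<=` prod_sigma (I:=I) (X:=X).
Proof.
apply: smallest_sub; first exact: smallest_sigma_algebra.
by move=> A [i _ h]; apply: sub_sigma_algebra; exists i.
Qed.

Definition cylinder_at : set (set (I -> X)) := fun B =>
  exists D E, [/\ sigma_except D, @borel X E & B = D `&` [set g | E (g j)]].

Lemma cylinder_at_setI_closed : setI_closed cylinder_at.
Proof.
move=> _ _ [D1 [E1 [h1 e1 ->]]] [D2 [E2 [h2 e2 ->]]].
exists (D1 `&` D2), (E1 `&` E2); split.
- exact: sigma_algebra_setI sigma_algebra_except h1 h2.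
- exact: sigma_algebra_setI borel_sigma_algebra e1 e2.
- by apply/seteqP; split => g /= [[? ?] [? ?]].
Qed.

Lemma cylinder_at_prod : cylinder_at `<=` prod_sigma (I:=I) (X:=X).
Proof.
move=> _ [D [E [SD bE ->]]].
apply: (sigma_algebra_setI (smallest_sigma_algebra _ _)); first exact: sigma_except_prod.
rewrite -[X in <<s _ >> X]setTI; apply: sub_sigma_algebra; exists j => //; by exists E.
Qed.

Lemma prod_sigma_cylinder_at : prod_sigma (I:=I) (X:=X) `<=` <<s cylinder_at >>.
Proof.
apply: smallest_sub; first exact: smallest_sigma_algebra.
move=> A [i _ [B bB <-]]; apply: sub_sigma_algebra.
have [->|ij] := eqVneq i j.
- exists setT, B; split => //; exact: sigma_algebra_setT sigma_algebra_except.
- exists (setT `&` (fun g : I -> X => g i) @^-1` B), setT; split => //.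
  + by apply: sub_sigma_algebra; exists i => //; exists B.
  + exact: sigma_algebra_setT borel_sigma_algebra.
  + by rewrite setIT.
Qed.

Variables Z1 Z2 : Omega -> (I -> X).
Hypotheses (Z12 : forall w i, i != j -> Z1 w i = Z2 w i)
  (mZ2 : forall D, sigma_except D -> measurable (Z2 @^-1` D))
  (mZ1j : forall E, borel E -> measurable ((fun w => Z1 w j) @^-1` E))
  (mZ2j : forall E, borel E -> measurable ((fun w => Z2 w j) @^-1` E)).

Lemma preimage_sigma_except D : sigma_except D -> Z1 @^-1` D = Z2 @^-1` D.
Proof.
by move=> SD; apply/seteqP; split => w; apply: (sigma_except_eq SD) => i ij;
  rewrite Z12.
Qed.

Lemma eq_in_law_cylinder_at :
  eq_in_law P Z1 Z2 <-> forall D E, sigma_except D -> borel E ->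
    P (Z2 @^-1` D `&` (fun w => Z1 w j) @^-1` E) =
    P (Z2 @^-1` D `&` (fun w => Z2 w j) @^-1` E).
Proof.
split => [law D E SD bE | e B /prod_sigma_cylinder_at].
  have := law (D `&` [set g | E (g j)]) (cylinder_at_prod _).
  by rewrite !preimage_setI (preimage_sigma_except SD); apply; exists D, E.
suff: <<s cylinder_at >> `<=` [set B | [/\ measurable (Z1 @^-1` B),
    measurable (Z2 @^-1` B) & P (Z1 @^-1` B) = P (Z2 @^-1` B)]] by move=> h /h [].
apply: g_sigma_algebra_sub_dynkin (dynkin_eq_law P Z1 Z2).
  exact: cylinder_at_setI_closed.
move=> _ [D [E [SD bE ->]]]; rewrite /= !preimage_setI (preimage_sigma_except SD).
by split; [apply: measurableI; [exact: mZ2|exact: mZ1j]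
          |apply: measurableI; [exact: mZ2|exact: mZ2j]|exact: e].
Qed.

End coordinate_replacement.

Section filtration_lemmas.
Variables (R : realType) (d : measure_display) (Omega : measurableType d)
  (X : completePseudoMetricType R) (I : countType)
  (Xa : nat -> I -> Omega -> X) (G : nat -> set (set Omega)).
Hypotheses (hG : filtration G) (hA : adapted G Xa).

Lemma filtration_measurable n : G n `<=` measurable.
Proof. exact: (hG.1 n).2. Qed.

Lemma filtration_le n m : (n <= m)%N -> G n `<=` G m.
Proof.
elim: m => [|m IH]; first by rewrite leqn0 => /eqP ->.
rewrite leq_eqVlt => /orP[/eqP -> //|/IH Gnm A /Gnm]; exact: hG.2.
Qed.

Lemma adapted_measurable m i (B : set X) : (0 < m)%N -> borel B ->
  measurable (Xa m i @^-1` B).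
Proof. by move=> m0 bB; apply: filtration_measurable; apply: hA. Qed.

Lemma sub_sigma_Gj j n : sub_sigma (Gj G Xa j n).
Proof.
split; first exact: smallest_sigma_algebra.
apply: smallest_sub; first exact: sigma_algebra_measurable.
move=> A [/filtration_measurable //|[i _ [B bB <-]]].
by rewrite setTI; apply: adapted_measurable.
Qed.

Lemma Gj_measurable j n : Gj G Xa j n `<=` measurable.
Proof. exact: (sub_sigma_Gj j n).2. Qed.

Lemma filtration_sub_Gj j n : G n `<=` Gj G Xa j n.
Proof. by move=> A GA; apply: sub_sigma_algebra; left. Qed.

Lemma Gj_subS j n : Gj G Xa j n `<=` Gj G Xa j n.+1.
Proof.
apply: smallest_sub; first exact: smallest_sigma_algebra.
move=> A [GA|[i _ [B bB <-]]]; apply: sub_sigma_algebra; left; first exact: hG.2.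
by rewrite setTI; apply: hA.
Qed.

Lemma Gj_le j n m : (n <= m)%N -> Gj G Xa j n `<=` Gj G Xa j m.
Proof.
elim: m => [|m IH]; first by rewrite leqn0 => /eqP ->.
rewrite leq_eqVlt => /orP[/eqP -> //|/IH Gnm A /Gnm]; exact: Gj_subS.
Qed.

Lemma measurable_bounded_borel_comp (f : X -> R) m j : (0 < m)%N ->
  bounded_borel_fun f -> measurable_fun [set: Omega] (f \o Xa m j).
Proof.
by move=> m0 [bf _] _ B mB; rewrite setTI; exact: adapted_measurable (bf _ mB).
Qed.

Lemma integrable_bounded_borel_comp (P : probability Omega R) (f : X -> R) m j
    (A : set Omega) : (0 < m)%N -> bounded_borel_fun f ->
  measurable A -> P.-integrable A (EFin \o (f \o Xa m j)).
Proof.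
move=> m0 bf mA; have [M fM] := bf.2.
apply: (@bounded_integrable _ _ _ P _ A M) => //; last by move=> x; exact: fM.
exact/measurable_funTS/measurable_bounded_borel_comp.
Qed.

End filtration_lemmas.

Section cid_step.
Variables (R : realType) (d : measure_display) (Omega : measurableType d)
  (P : probability Omega R) (X : completePseudoMetricType R) (I : countType)
  (Xa : nat -> I -> Omega -> X) (G : nat -> set (set Omega)).
Hypotheses (hG : filtration G) (hA : adapted G Xa).

Definition cid_step : Prop := forall j n (f : X -> R) A,
  bounded_borel_fun f -> Gj G Xa j n A ->
  (\int[P]_(x in A) (f (Xa n.+1 j x))%:E = \int[P]_(x in A) (f (Xa n.+2 j x))%:E)%E.

Lemma cid_stepD : cid_step -> forall j n k (f : X -> R) A,
  bounded_borel_fun f -> Gj G Xa j n A ->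
  (\int[P]_(x in A) (f (Xa n.+1 j x))%:E =
   \int[P]_(x in A) (f (Xa (n + k.+1) j x))%:E)%E.
Proof.
move=> step j n k f A bf GA; elim: k => [|k ->]; first by rewrite addn1.
by rewrite !addnS; apply: step => //; exact: (Gj_le hG hA (leq_addr k n)).
Qed.

Let cond_exp_row j n m (f : X -> R) (bf : bounded_borel_fun f) :=
  cond_exp (sub_sigma_Gj hG hA j n)
    (integrable_bounded_borel_comp hG hA P j (ltn0Sn m) bf measurableT).

Let is_cond_exp_row j n m f (bf : bounded_borel_fun f) :
  is_cond_exp P (Gj G Xa j n) (f \o Xa m.+1 j) (cond_exp_row j n m bf).
Proof. exact: is_cond_exp_cond_exp. Qed.

Lemma partially_cid_cid_step : partially_cid P G Xa <-> cid_step.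
Proof.
split.
- case=> _ pcid j n f A bf GA.
  have c1 := is_cond_exp_row j n n bf; have c2 := is_cond_exp_row j n n.+1 bf.
  have := pcid j 2%N n f isT bf; rewrite addn2 => /(_ _ _ c1 c2) ae.
  exact: (cond_exp_ae_eq_integral (sub_sigma_Gj hG hA j n) c1 c2 ae GA).
- move=> step; split => // j [//|k] n f _ bf Y1 Y2 c1 [m2 i2 e2].
  apply: (is_cond_exp_ae_eq (sub_sigma_Gj hG hA j n) c1).
  by split => // A GA; rewrite e2 //; apply/esym/(cid_stepD step).
Qed.

Lemma martingale_cid_step :
  (forall (j : I) (f : X -> R), bounded_borel_fun f ->
    forall M : nat -> Omega -> R,
      (forall n, is_cond_exp P (Gj G Xa j n) (f \o Xa n.+1 j) (M n)) ->
      martingale P (Gj G Xa j) M) <-> cid_step.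
Proof.
split.
- move=> mart j n f A bf GA.
  pose M m := cond_exp_row j m m bf.
  have cM m : is_cond_exp P (Gj G Xa j m) (f \o Xa m.+1 j) (M m).
    exact: is_cond_exp_row.
  have [_ _ e] := mart j f bf M cM n.
  have [_ _ e1] := cM n; have [_ _ e2] := cM n.+1.
  by rewrite -e1 // e // e2 //; exact: Gj_subS.
- move=> step j f bf M cM n.
  have [m1 i1 e1] := cM n; have [_ _ e2] := cM n.+1.
  split => // A GA; rewrite e1 // e2; last exact: Gj_subS.
  exact: step.
Qed.

End cid_step.

Lemma bounded_borel_fun_indic (R : realType) (X : topologicalType) (E : set X) :
  borel E -> bounded_borel_fun (\1_E : X -> R).
Proof.
move=> bE; split; last by exists 1 => x; rewrite indicE; case: (_ \in _); rewrite ?normr1 ?normr0.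
move=> B mB; rewrite preimage_indic.
case: ifPn => _; case: ifPn => _ //.
- exact: sigma_algebra_setT (@borel_sigma_algebra X).
- exact: sigma_algebra_setC (@borel_sigma_algebra X) bE.
- by case: (@borel_sigma_algebra X).
Qed.

Section cid_step_sets.
Variables (R : realType) (d : measure_display) (Omega : measurableType d)
  (P : probability Omega R) (X : completePseudoMetricType R) (I : countType)
  (Xa : nat -> I -> Omega -> X) (G : nat -> set (set Omega)).
Hypotheses (hG : filtration G) (hA : adapted G Xa).

Definition cid_step_sets : Prop := forall j n A (E : set X),
  Gj G Xa j n A -> borel E ->
  P (A `&` Xa n.+1 j @^-1` E) = P (A `&` Xa n.+2 j @^-1` E).

Lemma cid_step_setsP : cid_step P Xa G <-> cid_step_sets.
Proof.
split => step.
- move=> j n A E GA bE; have mA := Gj_measurable hG hA GA.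
  have integral_indic_row m : (0 < m)%N ->
      (\int[P]_(x in A) ((\1_E : X -> R) (Xa m j x))%:E)%E = P (A `&` Xa m j @^-1` E).
    by move=> m0; rewrite setIC -integral_indic //; exact: (adapted_measurable hG hA).
  by rewrite -!integral_indic_row //; apply: step => //; exact: bounded_borel_fun_indic.
- move=> j n f A bf GA.
  apply: (integral_eq_trace_law (Gj_measurable hG hA GA)) => // E bE.
  + exact: (adapted_measurable hG hA).
  + exact: (adapted_measurable hG hA).
  + exact: step.
Qed.

End cid_step_sets.

Section optional_stopping.
Variables (R : realType) (d : measure_display) (Omega : measurableType d)
  (P : probability Omega R) (X : completePseudoMetricType R) (I : countType)
  (Xa : nat -> I -> Omega -> X) (G : nat -> set (set Omega)).
Hypotheses (hG : filtration G) (hA : adapted G Xa).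

Lemma stopping_time_le tau N : stopping_time G tau -> G N [set w | (tau w <= N)%N].
Proof.
move=> st.
have -> : [set w | (tau w <= N)%N] =
    \bigcup_m (if (m <= N)%N then tau @^-1` [set m] else set0).
  apply/seteqP; split => w /=; first by move=> h; exists (tau w) => //; rewrite h.
  by move=> [m _]; case: ifPn => // mN /= ->.
case: (hG.1 N).1 => _ _; apply => m.
by case: ifPn => [mN|_]; [exact: (filtration_le hG mN) | case: (hG.1 N).1].
Qed.

Lemma measurable_stopped_row j tau (E : set X) : stopping_time G tau -> borel E ->
  measurable [set w | E (Xa (tau w).+1 j w)].
Proof.
move=> st bE.
have -> : [set w | E (Xa (tau w).+1 j w)] =
    \bigcup_m (tau @^-1` [set m] `&` Xa m.+1 j @^-1` E).
  by apply/seteqP; split => w /=; [exists (tau w)|move=> [m _ [/= -> ?]]].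
apply: bigcupT_measurable => m; apply: measurableI.
- exact: (filtration_measurable hG (st m)).
- exact: (adapted_measurable hG hA).
Qed.

Variables (j : I) (E : set X) (tau : Omega -> nat) (n : nat) (C : set Omega).
Hypotheses (bE : borel E) (st : stopping_time G tau) (tau_ge : forall w, (n <= tau w)%N)
  (GC : Gj G Xa j n C).

Local Ltac lia_sets := simpl in *; lia.

Local Notation tle N := [set w | (tau w <= N)%N].
Local Notation row m := (Xa m j @^-1` E).
Local Notation stopped := [set w | E (Xa (tau w).+1 j w)].

Let mC : measurable C := Gj_measurable hG hA GC.
Let mstopped : measurable stopped := measurable_stopped_row j st bE.
Let mrow m : measurable (row m.+1) := adapted_measurable hG hA j (ltn0Sn m) bE.
Let mtle N : measurable (tle N) := filtration_measurable hG (stopping_time_le N st).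
Let mI3 (A B D : set Omega) : measurable A -> measurable B -> measurable D ->
  measurable (A `&` B `&` D).
Proof. by move=> mA mB mD; apply: measurableI => //; apply: measurableI. Qed.

Let hit N := C `&` [set w | tau w = N.+1] `&` row N.+2.

Lemma Pr_stopped_base :
  Pr P (C `&` tle n `&` stopped) + Pr P (C `&` ~` tle n `&` row n.+1) =
  Pr P (C `&` row n.+1).
Proof.
rewrite [RHS](Pr_setIC P _ (mtle n)); last exact: measurableI.
congr (Pr P _ + Pr P _); apply/seteqP; split => w /=.
- move=> [[Cw lw] Sw]; have tw : tau w = n by have := tau_ge w; lia.
  by move: Sw; rewrite /= tw.
- move=> [[Cw Rw] lw]; have tw : tau w = n by have := tau_ge w; lia.
  by split => //=; rewrite tw.
- by move=> [[? ?] ?].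
- by move=> [[? ?] ?].
Qed.

Lemma Pr_stopped_succ N :
  Pr P (C `&` tle N.+1 `&` stopped) = Pr P (C `&` tle N `&` stopped) + Pr P (hit N).
Proof.
rewrite [LHS](Pr_setIC P _ (mtle N)); last exact: mI3.
congr (Pr P _ + Pr P _); apply/seteqP; split => w /=.
- by move=> [[[Cw lw] Sw] lw']; split => //; split => //; lia_sets.
- by move=> [[Cw lw] Sw]; repeat (split => //=); lia_sets.
- move=> [[[Cw lw] Sw] lw']; have tw : tau w = N.+1 by lia_sets.
  by move: Sw; rewrite /= tw.
- move=> [[Cw tw] Rw]; split; last by lia_sets.
  by split; [split => //; lia_sets|rewrite /= tw].
Qed.

Lemma Pr_row_gt N : Pr P (C `&` ~` tle N `&` row N.+2) =
  Pr P (hit N) + Pr P (C `&` ~` tle N.+1 `&` row N.+2).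
Proof.
rewrite [LHS](Pr_setIC P _ (mtle N.+1)); last first.
  exact: mI3 mC (measurableC (mtle N)) (mrow N.+1).
congr (Pr P _ + Pr P _); apply/seteqP; split => w /=.
- by move=> [[[Cw lw] Rw] lw']; split => //; split => //; lia_sets.
- by move=> [[Cw tw] Rw]; split; [split => //; split => //; lia_sets|lia_sets].
- by move=> [[[Cw lw] Rw] lw']; split => //; split => //.
- by move=> [[Cw lw] Rw]; split; [split => //; split => //; lia_sets|].
Qed.

Hypothesis step : forall m A, Gj G Xa j m A ->
  P (A `&` row m.+1) = P (A `&` row m.+2).

Lemma Pr_stopped_telescope k :
  Pr P (C `&` tle (n + k) `&` stopped) + Pr P (C `&` ~` tle (n + k) `&` row (n + k).+1) =
  Pr P (C `&` row n.+1).
Proof.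
elim: k => [|k <-]; first by rewrite addn0 Pr_stopped_base.
have row_shift : Pr P (C `&` ~` tle (n + k) `&` row (n + k).+1) =
                 Pr P (C `&` ~` tle (n + k) `&` row (n + k).+2).
  rewrite /Pr step //; apply: sigma_algebra_setI (sub_sigma_Gj hG hA j _).1 _ _.
  - exact: (Gj_le hG hA (leq_addr k n)).
  - apply: filtration_sub_Gj.
    exact: sigma_algebra_setC (hG.1 _).1 (stopping_time_le _ st).
by rewrite addnS Pr_stopped_succ row_shift Pr_row_gt; lra.
Qed.

Lemma Pr_stopped_row_dist N : (n <= N)%N ->
  `|Pr P (C `&` stopped) - Pr P (C `&` row n.+1)| <= Pr P (~` tle N).
Proof.
move=> nN; rewrite -(Pr_stopped_telescope (N - n)) subnKC //.
rewrite [Pr P (C `&` stopped)](Pr_setIC P _ (mtle N)); last exact: measurableI.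
have h1 : Pr P (C `&` stopped `&` ~` tle N) <= Pr P (~` tle N).
  by apply: Pr_le; [exact: mI3 mC mstopped (measurableC (mtle N))
                  | exact: measurableC | move=> w [_]].
have h2 : Pr P (C `&` ~` tle N `&` row N.+1) <= Pr P (~` tle N).
  by apply: Pr_le; [exact: mI3 mC (measurableC (mtle N)) (mrow N)
                  | exact: measurableC | move=> w [[]]].
have -> : C `&` stopped `&` tle N = C `&` tle N `&` stopped by rewrite setIAC.
have := Pr_ge0 P (C `&` stopped `&` ~` tle N).
have := Pr_ge0 P (C `&` ~` tle N `&` row N.+1).
by rewrite ler_norml; move=> *; apply/andP; split; lra.
Qed.

Lemma P_stopped_row : P (C `&` stopped) = P (C `&` row n.+1).
Proof.
rewrite !PrE; [congr (_%:E)| exact: measurableI | exact: measurableI].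
apply/eqP; rewrite -subr_eq0 -normr_le0; apply/ler_addgt0Pr => e e0.
have [N [nN tailN]] := Pr_tail_small P mtle n e0.
by rewrite add0r; apply: le_trans tailN; exact: Pr_stopped_row_dist.
Qed.

End optional_stopping.

Section stopped_law.
Variables (R : realType) (d : measure_display) (Omega : measurableType d)
  (P : probability Omega R) (X : completePseudoMetricType R) (I : countType)
  (Xa : nat -> I -> Omega -> X) (G : nat -> set (set Omega)).
Hypotheses (hG : filtration G) (hA : adapted G Xa).

Definition row_of m : Omega -> (I -> X) := fun w i => Xa m i w.

Definition stopped_law : Prop := forall n j (tau : Omega -> nat),
  stopping_time G tau -> (forall w, (n <= tau w)%N) ->
  eq_in_law P (fun w i => if i == j then Xa (tau w).+1 j w else Xa n.+1 i w)
    (row_of n.+1).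

Lemma Gj_preimage_sigma_except j n D : sigma_except (X := X) j D ->
  Gj G Xa j n (row_of n.+1 @^-1` D).
Proof.
move=> SD; rewrite -[_ @^-1` _]setTI.
apply: (smallest_sub (sigma_algebra_image (row_of n.+1) (sub_sigma_Gj hG hA j n).1) _ SD).
move=> _ [i ij [B bB <-]]; apply: sub_sigma_algebra; right; exists i => //.
by exists B => //; rewrite !setTI.
Qed.

Lemma cid_step_sets_stopped_law : cid_step_sets P Xa G -> stopped_law.
Proof.
move=> step n j tau st tn.
pose Z1 w i := if i == j then Xa (tau w).+1 j w else Xa n.+1 i w.
have Z12 w i : i != j -> Z1 w i = row_of n.+1 w i by move=> ij; rewrite /Z1 (negbTE ij).
have stoppedE (E : set X) :
    (fun w => Z1 w j) @^-1` E = [set w | E (Xa (tau w).+1 j w)].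
  by apply/seteqP; split => w; rewrite /= /Z1 eqxx.
have mrow D : sigma_except j D -> measurable (row_of n.+1 @^-1` D).
  by move=> SD; exact: (Gj_measurable hG hA (Gj_preimage_sigma_except (n := n) SD)).
have mstopped E : borel E -> measurable ((fun w => Z1 w j) @^-1` E).
  by move=> bE; rewrite stoppedE; exact: (measurable_stopped_row hG hA j st bE).
have mrowj E : borel E -> measurable ((fun w => row_of n.+1 w j) @^-1` E).
  by move=> bE; exact: (adapted_measurable hG hA).
apply/(eq_in_law_cylinder_at P Z12 mrow mstopped mrowj) => D E SD bE.
rewrite stoppedE; apply: (P_stopped_row hG hA) => //.
- exact: Gj_preimage_sigma_except.
- by move=> m A GA; exact: step.
Qed.

Lemma stopping_time_switch n B : G n B ->
  stopping_time G (fun w => if w \in B then n.+1 else n).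
Proof.
move=> GB m; set tau := fun w => _.
have [->|mn1] := eqVneq m n.+1.
  have -> : tau @^-1` [set n.+1] = B.
    apply/seteqP; split => w /=; rewrite /tau.
    - by case: ifPn => [/set_mem //|_ /n_Sn].
    - by move=> Bw; rewrite (mem_set Bw).
  exact: hG.2.
have [->|mn] := eqVneq m n.
  have -> : tau @^-1` [set n] = ~` B.
    apply/seteqP; split => w /=; rewrite /tau.
    - by case: ifPn => [_ /esym/n_Sn //|/negP nB _ Bw]; apply/nB/mem_set.
    - by move=> nB; rewrite ifN // notin_setE.
  exact: sigma_algebra_setC (hG.1 n).1 GB.
have -> : tau @^-1` [set m] = set0.
  apply/seteqP; split => w //=; rewrite /tau.
  by case: ifPn => _ hw; [move: mn1|move: mn]; rewrite hw eqxx.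
by case: (hG.1 m).1.
Qed.

Lemma stopped_law_base : stopped_law -> forall n j (E : set X) B D,
  borel E -> G n B -> sigma_except j D ->
  P (row_of n.+1 @^-1` D `&` B `&` Xa n.+1 j @^-1` E) =
  P (row_of n.+1 @^-1` D `&` B `&` Xa n.+2 j @^-1` E).
Proof.
move=> law n j E B D bE GB SD.
pose tau w := if w \in B then n.+1 else n.
have tn w : (n <= tau w)%N by rewrite /tau; case: ifPn.
have cyl : prod_sigma (D `&` [set g | E (g j)]).
  by apply: (@cylinder_at_prod R X I j); exists D, E.
have := law n j tau (stopping_time_switch GB) tn _ cyl.
rewrite !preimage_setI (@preimage_sigma_except _ _ _ _ _ j _ (row_of n.+1) _ _ SD); last first.
  by move=> w i ij; rewrite /= (negbTE ij).
have -> : (fun w i => if i == j then Xa (tau w).+1 j w else Xa n.+1 i w) @^-1`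
    [set g | E (g j)] = (B `&` Xa n.+2 j @^-1` E) `|` (~` B `&` Xa n.+1 j @^-1` E).
  apply/seteqP; split => w /=; rewrite eqxx /tau.
  - by case: ifPn => [/set_mem|/negP nB]; [left|right; split => // /mem_set].
  - by case=> -[Bw]; [rewrite (mem_set Bw)|rewrite ifN // notin_setE].
have mB := filtration_measurable hG GB.
apply: measure_switch => //; try exact: (adapted_measurable hG hA).
exact: (Gj_measurable hG hA (Gj_preimage_sigma_except (n := n) SD)).
Qed.

Definition cylinders_Gj j n : set (set Omega) := [set A | exists B D,
  [/\ G n B, sigma_except j D & A = row_of n.+1 @^-1` D `&` B]].

Lemma cylinders_Gj_setI_closed j n : setI_closed (cylinders_Gj j n).
Proof.
move=> _ _ [B1 [D1 [g1 s1 ->]]] [B2 [D2 [g2 s2 ->]]].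
exists (B1 `&` B2), (D1 `&` D2); split.
- exact: sigma_algebra_setI (hG.1 n).1 g1 g2.
- exact: sigma_algebra_setI (sigma_algebra_except X j) s1 s2.
- by rewrite preimage_setI setIACA.
Qed.

Lemma Gj_sub_cylinders j n : Gj G Xa j n `<=` <<s cylinders_Gj j n >>.
Proof.
apply: smallest_sub; first exact: smallest_sigma_algebra.
move=> A [GA|[i ij [B bB <-]]]; apply: sub_sigma_algebra.
- exists A, setT; split => //; first exact: sigma_algebra_setT (sigma_algebra_except X j).
  by rewrite preimage_setT setTI.
- exists setT, (setT `&` (fun g => g i) @^-1` B); split.
  + exact: sigma_algebra_setT (hG.1 n).1.
  + by apply: sub_sigma_algebra; exists i => //; exists B.
  + by rewrite setIT preimage_setI preimage_setT.
Qed.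

Lemma stopped_law_cid_step_sets : stopped_law -> cid_step_sets P Xa G.
Proof.
move=> law j n A E GA bE.
have mrow m : measurable (Xa m.+1 j @^-1` E) by exact: (adapted_measurable hG hA).
have base := stopped_law_base law bE.
suff : <<s cylinders_Gj j n >> `<=` [set A | measurable A /\
    P (A `&` Xa n.+1 j @^-1` E) = P (A `&` Xa n.+2 j @^-1` E)].
  by move=> /(_ _ (Gj_sub_cylinders GA)) [].
apply: g_sigma_algebra_sub_dynkin; first exact: cylinders_Gj_setI_closed.
- move=> _ [B [D [GB SD ->]]]; split; last exact: base.
  apply: measurableI; last exact: (filtration_measurable hG GB).
  exact: (Gj_measurable hG hA (Gj_preimage_sigma_except (n := n) SD)).
- apply: dynkin_eq_trace => //.
  have := base n j setT setT (sigma_algebra_setT (hG.1 n).1)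
    (sigma_algebra_setT (sigma_algebra_except X j)).
  by rewrite preimage_setT !setTI.
Qed.

End stopped_law.

Unset Implicit Arguments. Set Strict Implicit.

Theorem mainTheorem3 (R : realType) (d : measure_display) (Omega : measurableType d)
  (P : probability Omega R) (X : completePseudoMetricType R) (I : countType)
  (Xa : nat -> I -> Omega -> X) (G : nat -> set (set Omega)) :
  polish X -> filtration G -> adapted G Xa ->
  (partially_cid P G Xa <->
   (forall (j : I) (f : X -> R), bounded_borel_fun f ->
    forall M : nat -> Omega -> R,
      (forall n, is_cond_exp P (Gj G Xa j n) (f \o Xa n.+1 j) (M n)) ->
      martingale P (Gj G Xa j) M)) /\
  (partially_cid P G Xa <->
   (forall (n : nat) (j : I) (tau : Omega -> nat),
      stopping_time G tau -> (forall w, (n <= tau w)%N) ->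
      eq_in_law P
        (fun w i => if i == j then Xa (tau w).+1 j w else Xa n.+1 i w)
        (fun w i => Xa n.+1 i w))).
Proof.
move=> _ hG hA; have cid := partially_cid_cid_step P hG hA.
split; first exact: iff_trans cid (iff_sym (martingale_cid_step P hG hA)).
apply: iff_trans cid (iff_trans (cid_step_setsP P hG hA) _).
split; [exact: cid_step_sets_stopped_law | exact: stopped_law_cid_step_sets].
Qed.
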